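(* Let $H$ be a $k$-uniform hypergraph and $d$ a positive integer. The toric ideal $I_H$ is generated in degree at most $d$ if and only if for every primitive monomial walk $\mathcal W$ of length $2n>2d$ with $\operatorname{supp}(\mathcal W)\subseteq E(H)$, one of the following two conditions holds: (i) there exists a proper splitting set $S$ of $\mathcal W$; or (ii) there is a finite sequence of pairs $(S_1,R_1),\dots,(S_N,R_N)$ of multisets of edges such that - $S_1$ and $R_1$ are, respectively, a blue splitting set and a red splitting set of $\mathcal W$, each of size less than $n$, with decompositions $(\Gamma_{1,1},S_1,\Gamma_{2,1})$ and $(\Upsilon_{1,1},R_1,\Upsilon_{2,1})$ respectively; - for each $1\le i<N$, $S_{i+1}$ and $R_{i+1}$ are, respectively, a blue splitting set and a red splitting set of $\mathcal W_i$, each of size less than $n$, with decompositions $(\Gamma_{1,i+1},S_{i+1},\Gamma_{2,i+1})$ and $(\Upsilon_{1,i+1},R_{i+1},\Upsilon_{2,i+1})$ respectively, where for each $i$, $\mathcal W_i$ denotes the bicolored multiset whose blue part is $(\Gamma_{2,i})_{blue}$ and whose red part is $(\Upsilon_{1,i})_{red}$; - $S_N\cap R_N\neq\emptyset$, or there exists a proper splitting set of $\mathcal W_N$.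
   Context: A hypergraph $H$ has vertex set $V=\{1,\dots,m\}$ and a set $E(H)$ of edges, each a nonempty subset of $V$ (no repeated edges); it is $k$-uniform if every edge has exactly $k$ elements. For a field $K$, the toric ideal $I_H$ is the kernel of $\phi_H: K[t_e : e\in E(H)]\to K[x_1,\dots,x_m]$, $t_e\mapsto\prod_{j\in e}x_j$; ''generated in degree at most $d$'' means $I_H$ is generated by its elements of degree at most $d$. Multisets of edges: $|M|$ is the size counted with multiplicity (the ''size'' of $M$); $\operatorname{supp}(M)$ is the set of distinct elements; $M_1\sqcup M_2$ adds multiplicities; $M_1\cap M_2$ takes minimum multiplicities; $M_2\subseteq M_1$ is multiplicity-wise containment, and $M_2$ is a proper submultiset of $M_1$ if moreover $M_2\neq M_1$. A balanced edge set $\mathcal E$ is a pair of finite multisets $\mathcal E_{blue},\mathcal E_{red}$ of edges of $H$ such that every vertex lies in the same number of blue as red edges, counted with multiplicity; $\operatorname{supp}(\mathcal E)=\operatorname{supp}(\mathcal E_{blue}\sqcup\mathcal E_{red})$, and its length/size is $|\mathcal E|=|\mathcal E_{blue}|+|\mathcal E_{red}|$. For uniform $H$, balanced edge sets are called monomial walks. A balanced edge set $\mathcal E$ is primitive if there is no other balanced edge set $\mathcal E'$ with $\mathcal E'_{blue}\subsetneq\mathcal E_{blue}$ and $\mathcal E'_{red}\subsetneq\mathcal E_{red}$. A balanced edge set $\mathcal F$ is reducible with separator $S$ and decomposition $(\Gamma_1,S,\Gamma_2)$ if $S$ is a nonempty multiset with $\operatorname{supp}(S)\subseteq\operatorname{supp}(\mathcal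 F)$ and there are balanced edge sets $\Gamma_1\neq\mathcal F$, $\Gamma_2\neq\mathcal F$ with $S=\Gamma_{1,red}\cap\Gamma_{2,blue}$, $\mathcal F_{blue}\sqcup\mathcal F_{red}=\Gamma_{1,blue}\sqcup\Gamma_{1,red}\sqcup\Gamma_{2,blue}\sqcup\Gamma_{2,red}$, $\Gamma_{1,red},\Gamma_{2,red}\subseteq\mathcal F_{red}$ and $\Gamma_{1,blue},\Gamma_{2,blue}\subseteq\mathcal F_{blue}$. $S$ is proper with respect to $(\Gamma_1,S,\Gamma_2)$ if $S$ is a proper submultiset of both $\Gamma_{1,red}$ and $\Gamma_{2,blue}$; if not proper, $S$ is blue with respect to $(\Gamma_1,S,\Gamma_2)$ if $\Gamma_{1,red}=S$ and red if $\Gamma_{2,blue}=S$. For a bicolored multiset $\mathcal E$ and a multiset $S$ of edges, $\mathcal E+S$ has blue part $\mathcal E_{blue}\sqcup S$ and red part $\mathcal E_{red}\sqcup S$. A nonempty multiset $S$ with $\operatorname{supp}(S)\subseteq E(H)$ is a splitting set of $\mathcal E$ with decomposition $(\Gamma_1,S,\Gamma_2)$ if $\mathcal E+S$ is reducible with separator $S$ and decomposition $(\Gamma_1,S,\Gamma_2)$; it is a blue (resp. red) splitting set with respect to this decomposition if $S$ is a blue (resp. red) separator of $\mathcal E+S$ with respect to it; it is a proper splitting set of $\mathcal E$ if there is a decomposition of $\mathcal E+S$ with respect to which $S$ is proper. *)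

From mathcomp Require Import all_boot all_algebra.
From mathcomp Require Import mpoly.

Set Implicit Arguments.
Unset Strict Implicit.
Unset Printing Implicit Defensive.

Import GRing.Theory.

(* A hypergraph on the vertex set 'I_m (= {1..m} shifted) with r edges is
   given by an injective map [ed : 'I_r -> {set 'I_m}] (no repeated edges)
   whose values are nonempty. Edges of H are thus indexed by 'I_r, and a
   multiset of edges of H is a multiplicity function 'I_r -> nat. *)

Definition nonempty_edges (m r : nat) (ed : 'I_r -> {set 'I_m}) :=
  forall i, ed i != set0.

Definition uniform (m r : nat) (ed : 'I_r -> {set 'I_m}) (k : nat) :=
  forall i, #|ed i| = k.

Definition phiH (K : fieldType) (m r : nat) (ed : 'I_r -> {set 'I_m})
  (p : {mpoly K[r]}) : {mpoly K[m]} :=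
  mmap (@mpolyC m K) (fun i => (\prod_(j in ed i) 'X_j)%R) p.

Definition in_toric_ideal (K : fieldType) (m r : nat) (ed : 'I_r -> {set 'I_m})
  (p : {mpoly K[r]}) : Prop := phiH ed p = 0%R.

(* I_H is generated by its elements of (total) degree at most d:
   every element of I_H is a finite combination sum_i c_i g_i with g_i in I_H
   of degree <= d (msize g = 1 + total degree, msize 0 = 0). *)
Definition toric_generated_in_degree_le (K : fieldType) (m r : nat)
  (ed : 'I_r -> {set 'I_m}) (d : nat) : Prop :=
  forall f : {mpoly K[r]}, in_toric_ideal ed f ->
    exists (l : nat) (c g : 'I_l -> {mpoly K[r]}),
      (forall i, in_toric_ideal ed (g i) /\ (msize (g i) <= d.+1)%N) /\
      f = (\sum_(i < l) c i * g i)%R.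

Definition mset (r : nat) := {ffun 'I_r -> nat}.

Definition mset0 (r : nat) : mset r := [ffun=> 0%N].
Definition madd (r : nat) (A B : mset r) : mset r := [ffun i => (A i + B i)%N].
Definition mcap (r : nat) (A B : mset r) : mset r := [ffun i => minn (A i) (B i)].
Definition msub (r : nat) (A B : mset r) : Prop := forall i, (A i <= B i)%N.
Definition mproper (r : nat) (A B : mset r) : Prop := msub A B /\ A <> B.
Definition msz (r : nat) (A : mset r) : nat := (\sum_i A i)%N.
Definition mnonempty (r : nat) (A : mset r) : Prop := exists i, (0 < A i)%N.

Definition bms (r : nat) := (mset r * mset r)%type.
Definition blue (r : nat) (E : bms r) : mset r := E.1.
Definition red (r : nat) (E : bms r) : mset r := E.2.
Definition bsz (r : nat) (E : bms r) : nat := (msz (blue E) + msz (red E))%N.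

Definition balanced (m r : nat) (ed : 'I_r -> {set 'I_m}) (E : bms r) : Prop :=
  forall v : 'I_m,
    (\sum_(i | v \in ed i) blue E i)%N = (\sum_(i | v \in ed i) red E i)%N.

Definition primitive (m r : nat) (ed : 'I_r -> {set 'I_m}) (E : bms r) : Prop :=
  balanced ed E /\
  ~ (exists E' : bms r, balanced ed E' /\ (0 < bsz E')%N /\
       mproper (blue E') (blue E) /\ mproper (red E') (red E)).

Definition reducible_decomp (m r : nat) (ed : 'I_r -> {set 'I_m})
  (F : bms r) (S : mset r) (G1 G2 : bms r) : Prop :=
  [/\ mnonempty S,
      (forall i, (0 < S i)%N -> (0 < blue F i + red F i)%N),
      [/\ balanced ed G1, balanced ed G2, G1 <> F & G2 <> F] &
      [/\ S = mcap (red G1) (blue G2),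
          madd (blue F) (red F) =
            madd (madd (blue G1) (red G1)) (madd (blue G2) (red G2)),
          msub (red G1) (red F) /\ msub (red G2) (red F) &
          msub (blue G1) (blue F) /\ msub (blue G2) (blue F)]].

Definition proper_sep (r : nat) (S : mset r) (G1 G2 : bms r) : Prop :=
  mproper S (red G1) /\ mproper S (blue G2).

Definition blue_sep (r : nat) (S : mset r) (G1 G2 : bms r) : Prop :=
  ~ proper_sep S G1 G2 /\ red G1 = S.

Definition red_sep (r : nat) (S : mset r) (G1 G2 : bms r) : Prop :=
  ~ proper_sep S G1 G2 /\ blue G2 = S.

Definition bms_plus (r : nat) (E : bms r) (S : mset r) : bms r :=
  (madd (blue E) S, madd (red E) S).

Definition splitting_decomp (m r : nat) (ed : 'I_r -> {set 'I_m})
  (E : bms r) (S : mset r) (G1 G2 : bms r) : Prop :=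
  mnonempty S /\ reducible_decomp ed (bms_plus E S) S G1 G2.

Definition blue_splitting (m r : nat) (ed : 'I_r -> {set 'I_m})
  (E : bms r) (S : mset r) (G1 G2 : bms r) : Prop :=
  splitting_decomp ed E S G1 G2 /\ blue_sep S G1 G2.

Definition red_splitting (m r : nat) (ed : 'I_r -> {set 'I_m})
  (E : bms r) (S : mset r) (G1 G2 : bms r) : Prop :=
  splitting_decomp ed E S G1 G2 /\ red_sep S G1 G2.

Definition proper_splitting (m r : nat) (ed : 'I_r -> {set 'I_m})
  (E : bms r) (S : mset r) : Prop :=
  exists G1 G2 : bms r, splitting_decomp ed E S G1 G2 /\ proper_sep S G1 G2.

(* condition (ii) of Theorem 5.1, for the walk W of length 2n.
   Sequences are indexed by 1..N (values at other indices are irrelevant);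
   W_i has blue part (G2 i)_blue and red part (U1 i)_red. *)
Definition splitting_chain (m r : nat) (ed : 'I_r -> {set 'I_m})
  (W : bms r) (n : nat) : Prop :=
  exists (N : nat) (S R : nat -> mset r) (G1 G2 U1 U2 : nat -> bms r),
    let Wi := fun i => (blue (G2 i), red (U1 i)) : bms r in
    [/\ (1 <= N)%N,
        [/\ blue_splitting ed W (S 1%N) (G1 1%N) (G2 1%N),
            red_splitting ed W (R 1%N) (U1 1%N) (U2 1%N),
            (msz (S 1%N) < n)%N & (msz (R 1%N) < n)%N],
        (forall i, (1 <= i)%N -> (i < N)%N ->
          [/\ blue_splitting ed (Wi i) (S i.+1) (G1 i.+1) (G2 i.+1),
              red_splitting ed (Wi i) (R i.+1) (U1 i.+1) (U2 i.+1),
              (msz (S i.+1) < n)%N & (msz (R i.+1) < n)%N]) &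
        (mnonempty (mcap (S N) (R N)) \/
         exists P : mset r, proper_splitting ed (Wi N) P)].

From mathcomp Require Import all_boot all_algebra.
From mathcomp Require Import mpoly zify.
From Stdlib Require Import Relation_Operators Operators_Properties Classical ClassicalEpsilon.

Set Implicit Arguments.
Unset Strict Implicit.
Unset Printing Implicit Defensive.

(* Call two multisets of edges in the same fiber when they give every vertex
   the same degree, and join them by a move when they also share an edge.
   Since [t^a - t^b] lies in [I_H] exactly when [a] and [b] are in the same
   fiber, [I_H] is generated in degree at most [d] iff every fiber of size
   greater than [d] is connected by moves: a move through a common edge [e]
   factors as [t_e (t^(a-e) - t^(b-e))], which drives an induction on the
   degree, and conversely the indicator of a connected component is a linear
   form that kills every multiple of a low-degree element of [I_H] but not
   [t^a - t^b] for [b] outside the component of [a].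
   Connectivity of fibers is in turn equivalent to the splitting condition on
   primitive walks [(x, y)]: a proper splitting set, or a chain of splitting
   sets ending in a shared edge, yields a path from [x] to [y]; a walk that
   is not primitive is handled through a smaller balanced subwalk; and a path
   [x = z_0, ..., z_l = y] yields a chain whose blue splitting sets move from
   [z_i] to [z_(i+1)] and whose red splitting sets are single edges of [y]. *)

(* [lia] treats [A i] for [A : mset r] as an atom of type [(fun _ => nat) i],
   which it does not recognise as [nat]; naming these applications fixes it. *)
Ltac mset_lia :=
  repeat match goal with
  | H : context [ @fun_of_fin _ _ _ _ _ ] |- _ => move: H
  end;
  repeat match goal with
  | |- context [ @fun_of_fin ?T ?U ?P ?f ?i ] =>
      let x := fresh "x" in set x : nat := @fun_of_fin T U P f i
  end; lia.

Section EdgeMultisets.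
Variable r : nat.
Implicit Types a b c : mset r.

Definition mdiff a b : mset r := [ffun i => a i - b i].
Definition mset1 (i : 'I_r) : mset r := [ffun j => nat_of_bool (j == i)].

Lemma msz_madd a b : msz (madd a b) = msz a + msz b.
Proof. by rewrite /msz -big_split; apply: eq_bigr => i _; rewrite ffunE. Qed.

Lemma msz_mset1 i : msz (mset1 i) = 1.
Proof.
rewrite /msz (bigD1 i) //= big1 ?ffunE ?eqxx // => j /negbTE ji.
by rewrite ffunE ji.
Qed.

Lemma mset1_sub a i : 0 < a i -> msub (mset1 i) a.
Proof. by move=> a_i j; rewrite ffunE; case: eqP => [-> | _]. Qed.

Lemma msz_gt0 a : 0 < msz a <-> mnonempty a.
Proof.
split=> [|[i ai]]; last by rewrite /msz (bigD1 i) //=; lia.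
case: (pickP (fun i => 0 < a i)) => [i ai _ | a0]; first by exists i.
by rewrite /msz big1 // => i _; move: (a0 i) => /= /negbT; lia.
Qed.

Lemma mnonempty_mcap a b i : 0 < a i -> 0 < b i -> mnonempty (mcap a b).
Proof. by move=> ai bi; exists i; rewrite ffunE; mset_lia. Qed.

Lemma msub_msz_eq a b : msub a b -> msz a = msz b -> a = b.
Proof.
move=> ab eq_sz; apply/ffunP => i.
have : \sum_j (b j - a j) = 0.
  by rewrite sumnB // -/(msz b) -/(msz a) eq_sz subnn.
move/eqP; rewrite sum_nat_eq0 => /forallP /(_ i) /implyP /(_ isT) /eqP.
by have := ab i; mset_lia.
Qed.

Lemma msub_neq_lt a b : msub a b -> a <> b -> exists i, a i < b i.
Proof.
move=> ab neq; case: (pickP (fun i => a i < b i)) => [i lt_ab | ge_ab].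
  by exists i.
by case: neq; apply/ffunP => i; have := ab i; have := ge_ab i => /= /negbT; mset_lia.
Qed.

Lemma msz_neq_lt a b : msz a = msz b -> a <> b -> exists i, a i < b i.
Proof.
move=> eq_sz neq; case: (pickP (fun i => a i < b i)) => [i lt_ab | ge_ab].
  by exists i.
case: neq; apply/esym/msub_msz_eq => // i.
by have := ge_ab i => /= /negbT; mset_lia.
Qed.

Lemma maddC a b : madd a b = madd b a.
Proof. by apply/ffunP => i; rewrite !ffunE addnC. Qed.

Lemma madd_mdiff a b : msub b a -> madd (mdiff a b) b = a.
Proof. by move=> ba; apply/ffunP => i; rewrite !ffunE; have := ba i; mset_lia. Qed.

Lemma msz_mdiff_lt a b : msub b a -> mnonempty b -> msz (mdiff a b) < msz a.
Proof. by move=> ba /msz_gt0 b_gt0; rewrite -{2}(madd_mdiff ba) msz_madd; lia. Qed.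

Lemma mcap_dec a b : mnonempty (mcap a b) \/ (forall i, a i = 0 \/ b i = 0).
Proof.
case: (pickP (fun i => (0 < a i) && (0 < b i))) => [i /andP [ai bi] | disj].
  by left; exists i; rewrite ffunE; mset_lia.
by right=> i; have := disj i => /= /negbT; rewrite negb_and -!eqn0Ngt => /orP [] /eqP; auto.
Qed.

End EdgeMultisets.

Section Fibers.
Variables (m r : nat) (ed : 'I_r -> {set 'I_m}).
Implicit Types a b c x y z : mset r.

Definition vdeg a (v : 'I_m) : nat := \sum_(i | v \in ed i) a i.

Definition same_deg a b := forall v, vdeg a v = vdeg b v.

Definition fiber_adj a b := same_deg a b /\ mnonempty (mcap a b).

Definition fiber_conn := clos_refl_sym_trans (mset r) fiber_adj.

Lemma fiber_adj_conn a b : fiber_adj a b -> fiber_conn a b.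
Proof. exact: rst_step. Qed.

Lemma fiber_conn_sym a b : fiber_conn a b -> fiber_conn b a.
Proof. exact: rst_sym. Qed.

Lemma fiber_conn_trans b a c : fiber_conn a b -> fiber_conn b c -> fiber_conn a c.
Proof. exact: rst_trans. Qed.

Lemma vdegD a b v : vdeg (madd a b) v = vdeg a v + vdeg b v.
Proof. by rewrite /vdeg -big_split; apply: eq_bigr => i _; rewrite ffunE. Qed.

Lemma vdeg_mdiff a b v : msub b a -> vdeg (mdiff a b) v = vdeg a v - vdeg b v.
Proof. by move=> ba; rewrite -{2}(madd_mdiff ba) vdegD addnK. Qed.

Lemma same_deg_sym a b : same_deg a b -> same_deg b a.
Proof. by move=> ab v; rewrite ab. Qed.

Lemma same_deg_trans a b c : same_deg a b -> same_deg b c -> same_deg a c.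
Proof. by move=> ab bc v; rewrite ab bc. Qed.

Lemma fiber_adj_sym a b : fiber_adj a b -> fiber_adj b a.
Proof.
case=> ab [i abi]; split; first exact: same_deg_sym.
by exists i; move: abi; rewrite !ffunE minnC.
Qed.

Lemma fiber_conn_same_deg a b : fiber_conn a b -> same_deg a b.
Proof.
elim=> [x y [] | x v | x y _ /same_deg_sym | x y z _ xy _ yz] //.
exact: same_deg_trans xy yz.
Qed.

Lemma blue_splitting_of_fiber_adj x y w :
  fiber_adj x w -> same_deg w y -> x <> w -> msz x = msz w ->
  blue_splitting ed (x, y) (mdiff w (mcap x w))
    (mdiff x (mcap x w), mdiff w (mcap x w)) (w, y).
Proof.
move=> [xw c_ne] wy neq eq_sz; set c := mcap x w; set S := mdiff w c.
have cx : msub c x by move=> i; rewrite !ffunE; mset_lia.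
have cw : msub c w by move=> i; rewrite !ffunE; mset_lia.
have [i0 lt_xw] := msz_neq_lt eq_sz neq.
have S_i0 : 0 < S i0 by rewrite !ffunE; mset_lia.
split; last by split=> //; case=> [[_ /(_ erefl)]].
split; first by exists i0.
split; first by exists i0.
- by move=> i; rewrite /= !ffunE; mset_lia.
- split=> //.
  + by move=> v; change (vdeg (mdiff x c) v = vdeg S v); rewrite !vdeg_mdiff // xw.
  + by move/(congr1 (fun E : bms r => blue E i0)); rewrite /= !ffunE; mset_lia.
  + by move/(congr1 (fun E : bms r => red E i0)); rewrite /= !ffunE; mset_lia.
- split.
  + by apply/ffunP => i; rewrite /= !ffunE; mset_lia.
  + by apply/ffunP => i; rewrite /= !ffunE; mset_lia.
  + by split=> i; rewrite /= !ffunE; mset_lia.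
  + by split=> i; rewrite /= !ffunE; mset_lia.
Qed.

Lemma red_splitting_self (X : bms r) R :
  balanced ed X -> mnonempty R -> msub R (red X) -> red_splitting ed X R X (R, R).
Proof.
move=> balX [i0 R_i0] RX.
split; last by split=> //; case=> _ [_ /(_ erefl)].
split; first by exists i0.
split; first by exists i0.
- by move=> i; rewrite /= !ffunE; mset_lia.
- split=> //.
  + by move/(congr1 (fun E : bms r => red E i0)); rewrite /= !ffunE; mset_lia.
  + by case=> _ /(congr1 (fun f : mset r => f i0)); rewrite !ffunE; have := RX i0; mset_lia.
- split.
  + by apply/ffunP => i; rewrite /= !ffunE; have := RX i; mset_lia.
  + by apply/ffunP => i; rewrite /= !ffunE; mset_lia.
  + by split=> i; rewrite /= !ffunE; mset_lia.
  + by split=> i; rewrite /= !ffunE; mset_lia.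
Qed.

Lemma splitting_chain_one (X : bms r) n S R G1 G2 U1 U2 :
  blue_splitting ed X S G1 G2 -> red_splitting ed X R U1 U2 ->
  msz S < n -> msz R < n -> mnonempty (mcap S R) -> splitting_chain ed X n.
Proof.
move=> bS rR S_lt R_lt SR.
exists 1, (fun=> S), (fun=> R), (fun=> G1), (fun=> G2), (fun=> U1), (fun=> U2).
by split=> //; [move=> i i_ge1 i_lt1; lia | left].
Qed.

Lemma splitting_chain_cons (X : bms r) n S R G1 G2 U1 U2 :
  blue_splitting ed X S G1 G2 -> red_splitting ed X R U1 U2 ->
  msz S < n -> msz R < n -> splitting_chain ed (blue G2, red U1) n ->
  splitting_chain ed X n.
Proof.
move=> bS rR S_lt R_lt [N [S' [R' [G1' [G2' [U1' [U2' [N_gt0 first step last]]]]]]]].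
pose shift T (a : T) (f : nat -> T) i := if i <= 1 then a else f i.-1.
exists N.+1, (shift _ S S'), (shift _ R R'), (shift _ G1 G1'), (shift _ G2 G2'),
  (shift _ U1 U1'), (shift _ U2 U2').
split=> //; last by rewrite /shift ltnNge N_gt0.
move=> i i_ge1 i_le_N; rewrite /shift ltnNge i_ge1 /=.
case: (leqP i 1) => [i_le1 | i_gt1]; first by have -> : i = 1 by lia.
by have := step i.-1; rewrite prednK ?(ltnW i_gt1) //; apply; lia.
Qed.

Definition primitive_walks_split (d : nat) : Prop :=
  forall (W : bms r) (n : nat), primitive ed W -> bsz W = n.*2 -> d < n ->
    (exists S : mset r, proper_splitting ed W S) \/ splitting_chain ed W n.

Definition fibers_connected_above (d : nat) : Prop :=
  forall a b, same_deg a b -> d < msz a -> fiber_conn a b.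

(* Removing one edge from both halves of [(x, x)] leaves a nonempty balanced
   pair as soon as [x] has two edges. *)
Lemma primitive_blue_neq_red W : primitive ed W -> 1 < msz (blue W) -> blue W <> red W.
Proof.
case: W => x y [_ no_sub] /= sz_x exy; subst y.
have [i x_i] : mnonempty x by apply/msz_gt0; lia.
have x'x : msub (mdiff x (mset1 i)) x by move=> j; rewrite ffunE; mset_lia.
have sz' : msz (mdiff x (mset1 i)) = (msz x).-1.
  by rewrite -{2}(madd_mdiff (mset1_sub x_i)) msz_madd msz_mset1 addn1.
have neq : mdiff x (mset1 i) <> x by move=> e; move: sz'; rewrite e; lia.
apply: no_sub; exists (mdiff x (mset1 i), mdiff x (mset1 i)).
by split; [move=> v | split; [rewrite /bsz /= sz'; lia | split; split]].
Qed.

Section Uniform.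
Variable k : nat.
Hypotheses (ed_ne : nonempty_edges ed) (ed_unif : uniform ed k).

Lemma sum_vdeg a : \sum_v vdeg a v = k * msz a.
Proof.
rewrite /vdeg /msz (eq_bigr (fun v => \sum_i if v \in ed i then a i else 0));
  last by move=> v _; rewrite big_mkcond.
rewrite exchange_big big_distrr /=; apply: eq_bigr => i _.
by rewrite -big_mkcond /= sum_nat_const ed_unif mulnC.
Qed.

(* An edge is a nonempty set of [k] vertices, so the degree vector of a
   multiset determines its size. *)
Lemma same_deg_msz a b : same_deg a b -> msz a = msz b.
Proof.
move=> ab; have [k0 | k_gt0] := posnP k.
  suff msz0 c : msz c = 0 by rewrite !msz0.
  by rewrite /msz big1 // => i _; move: (ed_ne i); rewrite -card_gt0 ed_unif k0.
have : k * msz a = k * msz b.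
  by rewrite -!sum_vdeg; apply: eq_bigr => v _; rewrite ab.
by move/eqP; rewrite (eqn_pmul2l k_gt0) => /eqP.
Qed.

Lemma splitting_chain_of_path v x n :
  clos_refl_sym_trans_n1 _ fiber_adj v x -> same_deg x v -> x <> v ->
  msz v = n -> 1 < n -> splitting_chain ed (x, v) n.
Proof.
move=> path; elim: path => [|z y zy _ IH] // yv neq_yv sz_v n_gt1.
have yz : fiber_adj y z by case: zy => // /fiber_adj_sym.
have zv : same_deg z v := same_deg_trans (same_deg_sym yz.1) yv.
have sz_z : msz z = n by rewrite (same_deg_msz zv).
have [eyz | neq_yz] := eqVneq y z; first by subst y; exact: IH.
have bS := blue_splitting_of_fiber_adj yz zv (elimN eqP neq_yz) (same_deg_msz yz.1).
have S_lt : msz (mdiff z (mcap y z)) < n.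
  by rewrite -sz_z msz_mdiff_lt //; [move=> i; rewrite ffunE; mset_lia | exact: yz.2].
have red1 i : 0 < v i -> red_splitting ed (y, v) (mset1 i) (y, v) (mset1 i, mset1 i).
  move=> v_i; apply: red_splitting_self; [done | | exact: mset1_sub].
  by exists i; rewrite ffunE eqxx.
have [ezv | neq_zv] := eqVneq z v.
  have [i S_i] := bS.1.1; subst z.
  have v_i : 0 < v i by move: S_i; rewrite !ffunE; mset_lia.
  apply: splitting_chain_one bS (red1 i v_i) S_lt _ _; first by rewrite msz_mset1.
  by apply: (mnonempty_mcap (i := i)) => //; rewrite ffunE eqxx.
have [i v_i] : mnonempty v by apply/msz_gt0; lia.
apply: splitting_chain_cons bS (red1 i v_i) S_lt _ _; first by rewrite msz_mset1.
exact: IH (elimN eqP neq_zv) sz_v n_gt1.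
Qed.

Lemma blue_splitting_fiber_adj x y S G1 G2 :
  same_deg x y -> blue_splitting ed (x, y) S G1 G2 -> msz S < msz x ->
  fiber_adj x (blue G2) /\ msub S (blue G2).
Proof.
move=> xy [[_ [_ _ [balG1 balG2 _ _] [eS etot _ [_ b2F]]]] [_ r1S]] S_lt.
have {}balG1 : same_deg (blue G1) (red G1) := balG1.
have {}balG2 : same_deg (blue G2) (red G2) := balG2.
have SG2 : msub S (blue G2) by move=> i; rewrite eS !ffunE; mset_lia.
have G2x : same_deg (blue G2) x.
  move=> v; have := congr1 (vdeg^~ v) etot; rewrite !vdegD /= -r1S.
  by rewrite balG1 balG2 xy; lia.
split=> //; split; first exact: same_deg_sym.
have [|i lt_S] := msub_neq_lt SG2.
  by move=> eS2; move: S_lt; rewrite eS2 (same_deg_msz G2x); lia.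
by apply: (mnonempty_mcap (i := i)); move: lt_S (b2F i); rewrite /= ffunE; mset_lia.
Qed.

Lemma red_splitting_fiber_adj x y R U1 U2 :
  same_deg x y -> red_splitting ed (x, y) R U1 U2 -> msz R < msz y ->
  fiber_adj y (red U1) /\ msub R (red U1).
Proof.
move=> xy [[_ [_ _ [balU1 balU2 _ _] [eR etot [r1F _] _]]] [_ b2R]] R_lt.
have {}balU1 : same_deg (blue U1) (red U1) := balU1.
have {}balU2 : same_deg (blue U2) (red U2) := balU2.
have RU1 : msub R (red U1) by move=> i; rewrite eR !ffunE; mset_lia.
have U1y : same_deg (red U1) y.
  move=> v; have := congr1 (vdeg^~ v) etot; rewrite !vdegD /= -b2R.
  by rewrite balU1 -balU2 xy; lia.
split=> //; split; first exact: same_deg_sym.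
have [|i lt_R] := msub_neq_lt RU1.
  by move=> eR1; move: R_lt; rewrite eR1 (same_deg_msz U1y); lia.
by apply: (mnonempty_mcap (i := i)); move: lt_R (r1F i); rewrite /= ffunE; mset_lia.
Qed.

(* If [x + y = x' + y'] and [x] shares no edge with [x'], then [x <= y'], and
   since the two have the same size, [x = y'] and [y = x']. *)
Lemma fiber_conn_exchange x y x' y' :
  madd x y = madd x' y' -> same_deg x y -> same_deg x' y' -> fiber_conn x' y' ->
  fiber_conn x y.
Proof.
move=> sum_eq xy x'y' conn'.
have swap a b a' b' : madd a b = madd a' b' -> same_deg a b' ->
    (forall i, a i = 0 \/ a' i = 0) -> a = b' /\ b = a'.
  move=> sum_ab ab' disj.
  have sum_ab_i i : a i + b i = a' i + b' i.
    by have := congr1 (fun f : mset r => f i) sum_ab; rewrite !ffunE.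
  have ab'_eq : a = b'.
    apply: msub_msz_eq (same_deg_msz ab') => i.
    by have := sum_ab_i i; case: (disj i); mset_lia.
  by split=> //; apply/ffunP => i; have := sum_ab_i i; rewrite ab'_eq; mset_lia.
have xx' : same_deg x x'.
  by move=> v; have := congr1 (vdeg^~ v) sum_eq; rewrite !vdegD xy x'y'; lia.
case: (mcap_dec x x') => [xx'_ne | disj].
  case: (mcap_dec y y') => [yy'_ne | disj].
    apply: (fiber_conn_trans (fiber_adj_conn (conj xx' xx'_ne))).
    apply: (fiber_conn_trans conn'); apply/fiber_conn_sym/fiber_adj_conn; split=> //.
    exact: same_deg_trans (same_deg_sym xy) (same_deg_trans xx' x'y').
  have [-> ->] := swap y x y' x' (etrans (maddC _ _) (etrans sum_eq (maddC _ _)))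
    (same_deg_trans (same_deg_sym xy) xx') disj.
  exact: fiber_conn_sym.
have [-> ->] := swap x y x' y' sum_eq (same_deg_trans xx' x'y') disj.
exact: fiber_conn_sym.
Qed.

(* With [G1 = (b1, r1)] and [G2 = (b2, r2)], the walk [(x, y)] has the same
   multiset of edges as [(b1 + (b2 - S), (r1 - S) + r2)], whose halves are
   joined through [r1 + (b2 - S)]; properness makes both moves share an edge. *)
Lemma fiber_conn_of_proper_splitting x y S :
  same_deg x y -> proper_splitting ed (x, y) S -> fiber_conn x y.
Proof.
move=> xy [[b1 r1] [[b2 r2] [[_ [_ _ [bal1 bal2 _ _] [eS etot _ _]]] prop]]].
case: prop => [[Sr1 nSr1] [Sb2 nSb2]].
have {}bal1 : same_deg b1 r1 := bal1; have {}bal2 : same_deg b2 r2 := bal2.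
rewrite /= in eS etot Sr1 nSr1 Sb2 nSb2.
set beta := mdiff b2 S; set rho := mdiff r1 S.
have eb2 : madd beta S = b2 := madd_mdiff Sb2.
have er1 : madd rho S = r1 := madd_mdiff Sr1.
have [ib lt_b] := msub_neq_lt Sb2 nSb2; have [ir lt_r] := msub_neq_lt Sr1 nSr1.
apply: (@fiber_conn_exchange _ _ (madd b1 beta) (madd rho r2)).
- apply/ffunP => i; have := congr1 (fun f : mset r => f i) etot.
  by rewrite !ffunE eS ffunE; mset_lia.
- done.
- move=> v; have := congr1 (vdeg^~ v) eb2; have := congr1 (vdeg^~ v) er1.
  by rewrite !vdegD bal1 bal2; lia.
apply: (@fiber_conn_trans (madd r1 beta)); apply: fiber_adj_conn; split.
- by move=> v; rewrite !vdegD bal1.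
- by apply: (mnonempty_mcap (i := ib)); rewrite !ffunE; mset_lia.
- move=> v; have := congr1 (vdeg^~ v) eb2; have := congr1 (vdeg^~ v) er1.
  by rewrite !vdegD bal2; lia.
- by apply: (mnonempty_mcap (i := ir)); rewrite !ffunE; mset_lia.
Qed.

(* A smaller balanced pair [(a, b)] inside [(x, y)] gives the path
   [x -- b + (x - a) -- y]. *)
Lemma fiber_conn_of_balanced_sub x y a b :
  same_deg x y -> msub a x -> msub b y -> same_deg a b -> mnonempty a -> a <> x ->
  fiber_conn x y.
Proof.
move=> xy ax b_y ab [ia a_i] neq_ax.
have [i lt_ax] := msub_neq_lt ax neq_ax.
have [j b_j] : mnonempty b.
  by apply/msz_gt0; rewrite -(same_deg_msz ab); apply/msz_gt0; exists ia.
have zx : same_deg (madd b (mdiff x a)) x.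
  by move=> v; rewrite vdegD -ab addnC -vdegD madd_mdiff.
apply: (@fiber_conn_trans (madd b (mdiff x a))); apply: fiber_adj_conn; split.
- exact: same_deg_sym.
- by apply: (mnonempty_mcap (i := i)); rewrite ?ffunE; mset_lia.
- exact: same_deg_trans zx xy.
- by apply: (mnonempty_mcap (i := j)); rewrite ?ffunE; have := b_y j; mset_lia.
Qed.

Lemma splitting_pair_fiber_adj (X : bms r) n S R G1 G2 U1 U2 :
  balanced ed X -> msz (blue X) = n ->
  blue_splitting ed X S G1 G2 -> red_splitting ed X R U1 U2 -> msz S < n -> msz R < n ->
  [/\ fiber_adj (blue X) (blue G2), fiber_adj (red X) (red U1),
      msub S (blue G2) & msub R (red U1)].
Proof.
case: X => x y /= xy <- bS rR S_lt; rewrite (same_deg_msz xy) => R_lt.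
have [adj_b sub_b] := blue_splitting_fiber_adj xy bS S_lt.
have [adj_r sub_r] := red_splitting_fiber_adj xy rR R_lt.
by split.
Qed.

Lemma fiber_conn_of_splitting_chain x y n :
  same_deg x y -> msz x = n -> splitting_chain ed (x, y) n -> fiber_conn x y.
Proof.
move=> xy sz_x [N [S [R [G1 [G2 [U1 [U2 [N_gt0 first step last]]]]]]]].
have reached i : 0 < i <= N -> [/\ fiber_conn x (blue (G2 i)),
    fiber_conn y (red (U1 i)), msub (S i) (blue (G2 i)) & msub (R i) (red (U1 i))].
  elim: i => [// | i IH]; case/andP=> _ i_lt; have [-> | i_gt0] := posnP i.
    have [bS rR S_lt R_lt] := first.
    have [ab ar sb sr] := splitting_pair_fiber_adj (X := (x, y)) xy sz_x bS rR S_lt R_lt.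
    by split=> //; apply: fiber_adj_conn.
  have /IH [cb cr _ _] : 0 < i <= N by rewrite i_gt0 ltnW.
  have bG2 := fiber_conn_same_deg cb; have rU1 := fiber_conn_same_deg cr.
  have [bS rR S_lt R_lt] := step i i_gt0 i_lt.
  have [ab ar sb sr] := splitting_pair_fiber_adj (X := (blue (G2 i), red (U1 i)))
    (same_deg_trans (same_deg_sym bG2) (same_deg_trans xy rU1))
    (etrans (esym (same_deg_msz bG2)) sz_x) bS rR S_lt R_lt.
  by split=> //; apply: fiber_conn_trans (fiber_adj_conn _); eassumption.
have /reached [cb cr sb sr] : 0 < N <= N by rewrite N_gt0 leqnn.
have bG2 := fiber_conn_same_deg cb; have rU1 := fiber_conn_same_deg cr.
have G2U1 : same_deg (blue (G2 N)) (red (U1 N)).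
  exact: same_deg_trans (same_deg_sym bG2) (same_deg_trans xy rU1).
apply: (fiber_conn_trans cb); apply: (fiber_conn_trans _ (fiber_conn_sym cr)).
case: last => [[e SR_e] | [P propP]]; last exact: fiber_conn_of_proper_splitting propP.
apply: fiber_adj_conn; split=> //; apply: (mnonempty_mcap (i := e)).
- by move: SR_e (sb e); rewrite ffunE; mset_lia.
- by move: SR_e (sr e); rewrite ffunE; mset_lia.
Qed.

Lemma fibers_connected_of_walks_split d :
  primitive_walks_split d -> fibers_connected_above d.
Proof.
move=> walks_split x y xy d_lt.
have sz_y : msz y = msz x by rewrite (same_deg_msz xy).
case: (classic (primitive ed (x, y))) => [prim | not_prim].
  case: (walks_split (x, y) (msz x) prim _ d_lt) => [|[S propS] | chain].
  - by rewrite /bsz /= sz_y addnn.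
  - exact: fiber_conn_of_proper_splitting propS.
  - exact: fiber_conn_of_splitting_chain chain.
have [[a b] [ab [sz_ab [[ax neq_ax] [b_y _]]]]] : exists E' : bms r,
    balanced ed E' /\ 0 < bsz E' /\ mproper (blue E') x /\ mproper (red E') y.
  by apply: NNPP => no_sub; apply: not_prim.
have {}ab : same_deg a b := ab.
apply: (fiber_conn_of_balanced_sub xy ax b_y ab) => //.
by apply/msz_gt0; move: sz_ab; rewrite /bsz /= (same_deg_msz ab); lia.
Qed.

Lemma walks_split_of_fibers_connected d :
  0 < d -> fibers_connected_above d -> primitive_walks_split d.
Proof.
move=> d_gt0 conn [x y] n prim sz_W d_lt.
have xy : same_deg x y := prim.1.
have sz_x : msz x = n by move: sz_W; rewrite /bsz /= -(same_deg_msz xy); lia.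
right; apply: (splitting_chain_of_path (v := y)) => //.
- by apply/clos_rst_rstn1_iff/fiber_conn_sym/conn; rewrite ?sz_x.
- by move=> exy; apply: primitive_blue_neq_red prim _ exy; rewrite /= sz_x; lia.
- by rewrite -(same_deg_msz xy).
- lia.
Qed.

End Uniform.
End Fibers.

Definition asbool (P : Prop) : bool :=
  if excluded_middle_informative P then true else false.

Lemma asboolP (P : Prop) : reflect P (asbool P).
Proof. by rewrite /asbool; case: excluded_middle_informative => p; constructor. Qed.

Section ToricIdeal.
Variables (K : fieldType) (m r : nat) (ed : 'I_r -> {set 'I_m}).
Local Open Scope ring_scope.
Import GRing.Theory.
Implicit Types (a b : mset r) (mu nu : 'X_{1..r}) (p f g : {mpoly K[r]}).

Definition mnm_of a : 'X_{1..r} := [multinom a i | i < r].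
Definition mset_of mu : mset r := [ffun i => mu i].

Lemma mset_ofK : cancel mset_of mnm_of.
Proof. by move=> mu; apply/mnmP => i; rewrite mnmE ffunE. Qed.

Lemma mnm_ofK : cancel mnm_of mset_of.
Proof. by move=> a; apply/ffunP => i; rewrite ffunE mnmE. Qed.

Lemma mnm_of_madd a b : mnm_of (madd a b) = (mnm_of a + mnm_of b)%MM.
Proof. by apply/mnmP => i; rewrite mnmDE !mnmE ffunE. Qed.

Lemma Xmnm_of_madd a b :
  ('X_[mnm_of (madd a b)] : {mpoly K[r]}) = 'X_[mnm_of a] * 'X_[mnm_of b].
Proof. by rewrite mnm_of_madd mpolyXD. Qed.

Lemma mset_ofD mu nu : mset_of (mu + nu)%MM = madd (mset_of mu) (mset_of nu).
Proof. by apply/ffunP => i; rewrite !ffunE mnmDE. Qed.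

Lemma mdeg_mnm_of a : mdeg (mnm_of a) = msz a.
Proof. by rewrite mdegE; apply: eq_bigr => i _; rewrite mnmE. Qed.

Lemma msz_mset_of mu : msz (mset_of mu) = mdeg mu.
Proof. by rewrite -mdeg_mnm_of mset_ofK. Qed.

Definition edge_deg mu : 'X_{1..m} := [multinom (\sum_(i | j \in ed i) mu i)%N | j < m].

Lemma edge_degD mu nu : edge_deg (mu + nu)%MM = (edge_deg mu + edge_deg nu)%MM.
Proof.
by apply/mnmP => j; rewrite mnmDE !mnmE -big_split; apply: eq_bigr => i _; rewrite mnmDE.
Qed.

Lemma edge_deg_same_deg mu nu :
  edge_deg mu = edge_deg nu <-> same_deg ed (mset_of mu) (mset_of nu).
Proof.
have vdegE mu' v : vdeg ed (mset_of mu') v = edge_deg mu' v.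
  by rewrite mnmE /vdeg; apply: eq_bigr => i _; rewrite ffunE.
split=> [e v | sd]; first by rewrite !vdegE e.
by apply/mnmP => v; rewrite -!vdegE sd.
Qed.

Let edge_mon (i : 'I_r) : {mpoly K[m]} := \prod_(j in ed i) 'X_j.

Lemma mmap1_edge_mon mu : mmap1 edge_mon mu = 'X_[edge_deg mu].
Proof.
rewrite /mmap1 /edge_mon mpolyXE_id.
under [RHS]eq_bigr => j _ do rewrite mnmE -prodrXr.
rewrite (eq_bigr (fun i => \prod_(j < m) (if j \in ed i then 'X_j ^+ mu i else 1)));
  last by move=> i _; rewrite -prodrXl big_mkcond.
by rewrite exchange_big /=; apply: eq_bigr => j _; rewrite [RHS]big_mkcond.
Qed.

Lemma phiH_X mu : phiH ed ('X_[mu] : {mpoly K[r]}) = 'X_[edge_deg mu].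
Proof. by rewrite /phiH mmapX mmap1_edge_mon. Qed.

Lemma mcoeff_phiH p (e : 'X_{1..m}) :
  (phiH ed p)@_e = \sum_(mu <- msupp p) p@_mu * (edge_deg mu == e)%:R.
Proof.
rewrite /phiH /mmap raddf_sum /=; apply: eq_bigr => mu _.
by rewrite mcoeffCM -/(mmap1 edge_mon mu) mmap1_edge_mon mcoeffX.
Qed.

Lemma phiH_binomial a b : same_deg ed a b ->
  phiH ed ('X_[mnm_of a] - 'X_[mnm_of b] : {mpoly K[r]}) = 0.
Proof.
move=> ab; rewrite /phiH mmapB -!/(phiH _ _) !phiH_X.
suff -> : edge_deg (mnm_of a) = edge_deg (mnm_of b) by rewrite subrr.
by apply/edge_deg_same_deg; rewrite !mnm_ofK.
Qed.

(* Grouping the monomials of [f] by their image under [phi_H], each group has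
   coefficient sum zero, so [f] is a combination of binomials in [I_H]. *)
Lemma toric_binomial_expansion f : phiH ed f = 0 ->
  exists rep : 'X_{1..r} -> 'X_{1..r},
    (forall mu, mu \in msupp f -> edge_deg (rep mu) = edge_deg mu) /\
    f = \sum_(mu <- msupp f) f@_mu *: ('X_[mu] - 'X_[rep mu]).
Proof.
move=> f0; set s := msupp f.
pose rep mu := nth 0%MM s (find (fun mu' => edge_deg mu' == edge_deg mu) s).
have repE mu : mu \in s -> edge_deg (rep mu) = edge_deg mu.
  move=> mu_s; apply/eqP/(nth_find _ (a := fun mu' => edge_deg mu' == edge_deg mu)).
  by apply/hasP; exists mu.
exists rep; split=> //.
have rep0 : \sum_(mu <- s) f@_mu *: ('X_[rep mu] : {mpoly K[r]}) = 0.
  apply/mpolyP => z; rewrite mcoeff0 raddf_sum /=.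
  under eq_bigr => mu _ do rewrite mcoeffZ mcoeffX.
  case: (boolP (has (fun mu => rep mu == z) s)) => [/hasP [mu0 mu0_s /eqP ez] | no_z].
    subst z.
    rewrite (eq_big_seq (fun mu => f@_mu * (edge_deg mu == edge_deg mu0)%:R)).
      by rewrite -mcoeff_phiH f0 mcoeff0.
    move=> mu mu_s; congr (_ * (nat_of_bool _)%:R); apply/eqP/eqP => e.
      by rewrite -(repE _ mu_s) -(repE _ mu0_s) e.
    by rewrite /rep e.
  rewrite big1_seq // => mu mu_s; move/hasPn: no_z => /(_ mu mu_s) /negbTE ->.
  by rewrite mulr0.
rewrite (eq_bigr (fun mu => f@_mu *: 'X_[mu] - f@_mu *: 'X_[rep mu])); last first.
  by move=> mu _; rewrite scalerBr.
by rewrite sumrB rep0 subr0; exact: mpolyE.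
Qed.

Definition toric_comb (d : nat) p := exists s : seq ({mpoly K[r]} * {mpoly K[r]}),
  (forall c, c \in s -> in_toric_ideal ed c.2 /\ (msize c.2 <= d.+1)%N) /\
  p = \sum_(c <- s) c.1 * c.2.

Section ToricComb.
Variable d : nat.

Lemma toric_comb0 : toric_comb d 0.
Proof. by exists [::]; rewrite big_nil. Qed.

Lemma toric_combD p q : toric_comb d p -> toric_comb d q -> toric_comb d (p + q).
Proof.
move=> [s1 [gen1 ->]] [s2 [gen2 ->]]; exists (s1 ++ s2); rewrite big_cat.
by split=> // c; rewrite mem_cat => /orP [/gen1 | /gen2].
Qed.

Lemma toric_combMl c p : toric_comb d p -> toric_comb d (c * p).
Proof.
move=> [s [gen ->]]; exists [seq (c * x.1, x.2) | x <- s]; split.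
  by move=> x /mapP [y y_s ->]; exact: gen y_s.
by rewrite big_map mulr_sumr; apply: eq_bigr => x _; rewrite mulrA.
Qed.

Lemma toric_comb_sum (T : eqType) (s : seq T) (F : T -> {mpoly K[r]}) :
  (forall x, x \in s -> toric_comb d (F x)) -> toric_comb d (\sum_(x <- s) F x).
Proof.
move=> combF; rewrite big_seq; apply: big_ind => //.
- exact: toric_comb0.
- exact: toric_combD.
Qed.

Lemma toric_comb_gen g : in_toric_ideal ed g -> (msize g <= d.+1)%N -> toric_comb d g.
Proof.
move=> g0 g_sz; exists [:: (1, g)]; rewrite big_seq1 mul1r.
by split=> // c; rewrite mem_seq1 => /eqP ->.
Qed.

Lemma generated_of_toric_comb :
  (forall f, in_toric_ideal ed f -> toric_comb d f) -> toric_generated_in_degree_le K ed d.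
Proof.
move=> comb f /comb [s [gen ->]].
exists (size s), (fun i => (nth (0, 0) s i).1), (fun i => (nth (0, 0) s i).2).
split; first by move=> i; apply/gen/mem_nth.
by rewrite (big_nth (0, 0)) big_mkord.
Qed.

End ToricComb.

Section Uniform.
Variable k : nat.
Hypotheses (ed_ne : nonempty_edges ed) (ed_unif : uniform ed k).

Let same_deg_msz := same_deg_msz ed_ne ed_unif.

Lemma binomial_toric_comb d : fibers_connected_above ed d ->
  forall a b, same_deg ed a b -> toric_comb d ('X_[mnm_of a] - 'X_[mnm_of b]).
Proof.
move=> conn a b; move Dsz : (msz a) => D; elim/ltn_ind: D a b Dsz => D IH a b sz_a ab.
have sz_b : msz b = D by rewrite -(same_deg_msz ab).
have [D_le | d_lt] := leqP D d.
  apply: toric_comb_gen; first exact: phiH_binomial.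
  apply: leq_trans (msizeD_le _ _) _.
  by rewrite msizeN !msizeX !mdeg_mnm_of sz_a sz_b maxnn.
have conn_ab : fiber_conn ed a b by apply: conn; rewrite ?sz_a.
move: conn_ab sz_a.
elim=> {a b ab sz_b} [x y [xy [i xy_i]] | x | x y xy IHxy | x y z xy IHxy yz IHyz] sz_x.
- have [x_i y_i] : (0 < x i)%N /\ (0 < y i)%N.
    by move: xy_i; rewrite ffunE; split; mset_lia.
  have sz' : (msz (mdiff x (mset1 i)) < D)%N.
    rewrite -sz_x; apply: msz_mdiff_lt; first exact: mset1_sub.
    by exists i; rewrite ffunE eqxx.
  have ix := mset1_sub x_i; have iy := mset1_sub y_i.
  rewrite -(madd_mdiff ix) -(madd_mdiff iy) !Xmnm_of_madd -mulrBl mulrC.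
  by apply/toric_combMl/(IH _ sz' _ _ erefl) => v; rewrite !vdeg_mdiff // xy.
- by rewrite subrr; exact: toric_comb0.
- rewrite -opprB -mulN1r; apply/toric_combMl/IHxy.
  by rewrite (same_deg_msz (fiber_conn_same_deg xy)).
- have sz_y : msz y = D by rewrite -(same_deg_msz (fiber_conn_same_deg xy)).
  by rewrite -(subrKA ('X_[mnm_of y])); apply: toric_combD; [apply: IHxy | apply: IHyz].
Qed.

Lemma generated_of_fibers_connected d :
  fibers_connected_above ed d -> toric_generated_in_degree_le K ed d.
Proof.
move=> conn; apply: generated_of_toric_comb => f /toric_binomial_expansion [rep [repE ->]].
apply: toric_comb_sum => mu mu_f; rewrite -mul_mpolyC; apply: toric_combMl.
have := binomial_toric_comb conn (a := mset_of mu) (b := mset_of (rep mu)).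
by rewrite !mset_ofK; apply; apply/edge_deg_same_deg; rewrite repE.
Qed.

Section ComponentWeight.
Variables (n : nat) (u : mset r).

Definition in_component mu : bool :=
  (mdeg mu == n) && asbool (fiber_conn ed u (mset_of mu)).

Definition component_weight p : K :=
  \sum_(mu : 'X_{1..r < n.+1}) p@_mu * (in_component mu)%:R.

Lemma component_weightD p q :
  component_weight (p + q) = component_weight p + component_weight q.
Proof. by rewrite -big_split; apply: eq_bigr => mu _; rewrite mcoeffD mulrDl. Qed.

Lemma component_weightZ c p : component_weight (c *: p) = c * component_weight p.
Proof. by rewrite mulr_sumr; apply: eq_bigr => mu _; rewrite mcoeffZ mulrA. Qed.

Lemma component_weight_sum (I : Type) (s : seq I) (P : pred I) (F : I -> {mpoly K[r]}) :
  component_weight (\sum_(i <- s | P i) F i) = \sum_(i <- s | P i) component_weight (F i).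
Proof.
apply: (big_morph _ component_weightD).
by rewrite /component_weight big1 // => mu _; rewrite mcoeff0 mul0r.
Qed.

Lemma component_weightX nu : component_weight 'X_[nu] = (in_component nu)%:R.
Proof.
rewrite /component_weight; have [nu_lt | nu_ge] := ltnP (mdeg nu) n.+1.
  rewrite (bigD1 (BMultinom nu_lt)) //= mcoeffX eqxx mul1r big1 ?addr0 // => mu neq.
  rewrite mcoeffX; case: eqP => [e | _]; last by rewrite mul0r.
  by move: neq; rewrite bmeqP /= e eqxx.
rewrite /in_component (_ : mdeg nu == n = false) ?big1 // => [mu _ | ].
  rewrite mcoeffX; case: eqP => [e | _]; last by rewrite mul0r.
  by move: nu_ge; rewrite e; have := bmdeg mu; lia.
by apply/negbTE/eqP => e; move: nu_ge; rewrite e; lia.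
Qed.

(* For a nonconstant [X^a], the monomials of [X^a * g] that lie in the
   component all have the same image under [phi_H]: they are joined through
   the edges of [a]. Their weight is thus a coefficient of [phi_H g] = 0. *)
Lemma component_weight_toric d (a : 'X_{1..r}) g : (d < n)%N ->
  in_toric_ideal ed g -> (msize g <= d.+1)%N -> component_weight ('X_[a] * g) = 0.
Proof.
move=> d_lt g0 g_sz.
have -> : 'X_[a] * g = \sum_(w <- msupp g) g@_w *: 'X_[(a + w)%MM].
  rewrite {1}(mpolyE g) mulr_sumr; apply: eq_bigr => w _.
  by rewrite -scalerAr -mpolyXD.
rewrite component_weight_sum.
under eq_bigr => w _ do rewrite component_weightZ component_weightX.
have [-> | a_ne0] := eqVneq a 0%MM.
  rewrite big1_seq // => w w_g; rewrite /in_component add0m.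
  suff /negbTE -> : mdeg w != n by rewrite mulr0.
  by apply/eqP => e; have := msize_mdeg_lt w_g; rewrite e; lia.
case: (boolP (has (fun w => in_component (a + w)%MM) (msupp g))) => [/hasP [w0 w0_g] | none];
  last first.
  rewrite big1_seq // => w w_g; move/hasPn: none => /(_ w w_g) /negbTE ->.
  by rewrite mulr0.
case/andP => /eqP deg_w0 /asboolP conn_w0.
have [i a_i] : mnonempty (mset_of a).
  by apply/msz_gt0; rewrite msz_mset_of lt0n mdeg_eq0.
rewrite (eq_big_seq (fun w => g@_w * (edge_deg w == edge_deg w0)%:R)).
  by rewrite -mcoeff_phiH g0 mcoeff0.
move=> w w_g; congr (_ * (nat_of_bool _)%:R); apply/idP/eqP.
  case/andP=> _ /asboolP conn_w.
  have /edge_deg_same_deg : same_deg ed (mset_of (a + w)) (mset_of (a + w0)).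
    exact: fiber_conn_same_deg (fiber_conn_trans (fiber_conn_sym conn_w) conn_w0).
  by rewrite !edge_degD; apply: addmI.
move=> e; have sd : same_deg ed (mset_of (a + w0)) (mset_of (a + w)).
  by apply/edge_deg_same_deg; rewrite !edge_degD e.
apply/andP; split.
  by rewrite -msz_mset_of -(same_deg_msz sd) msz_mset_of deg_w0.
apply/asboolP/(fiber_conn_trans conn_w0)/fiber_adj_conn; split=> //.
apply: (mnonempty_mcap (i := i)); rewrite !mset_ofD !ffunE;
  by move: a_i; rewrite ffunE; mset_lia.
Qed.

End ComponentWeight.

Lemma fibers_connected_of_generated d :
  toric_generated_in_degree_le K ed d -> fibers_connected_above ed d.
Proof.
move=> gen u v uv d_lt; apply: NNPP => not_conn.
have [l [c [g [gen_g eq_uv]]]] := gen _ (phiH_binomial uv).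
have : component_weight (msz u) u ('X_[mnm_of u] - 'X_[mnm_of v]) = 1.
  rewrite component_weightD -scaleN1r component_weightZ !component_weightX.
  have -> : in_component (msz u) u (mnm_of u) = true.
    by rewrite /in_component mdeg_mnm_of mnm_ofK eqxx; apply/asboolP/rst_refl.
  have -> : in_component (msz u) u (mnm_of v) = false.
    by rewrite /in_component mnm_ofK; case: asboolP => [/not_conn [] | _]; rewrite andbF.
  by rewrite mulr0 addr0.
rewrite eq_uv component_weight_sum big1 => [/esym/eqP | i _]; first by rewrite oner_eq0.
have [g0 g_sz] := gen_g i.
rewrite (mpolyE (c i)) mulr_suml component_weight_sum big1 // => a _.
by rewrite -scalerAl component_weightZ (component_weight_toric u a d_lt g0 g_sz) mulr0.
Qed.

End Uniform.
End ToricIdeal.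

Theorem theorem5p1 (K : fieldType) (m r k : nat) (ed : 'I_r -> {set 'I_m})
  (ed_inj : injective ed) (ed_ne : nonempty_edges ed) (H_unif : uniform ed k)
  (d : nat) (d_pos : (0 < d)%N) :
  toric_generated_in_degree_le K ed d <->
  (forall (W : bms r) (n : nat),
     primitive ed W -> bsz W = n.*2 -> (d < n)%N ->
     (exists S : mset r, proper_splitting ed W S) \/ splitting_chain ed W n).
Proof.
have fibers_connected : toric_generated_in_degree_le K ed d <-> fibers_connected_above ed d.
  split; [exact: fibers_connected_of_generated | exact: generated_of_fibers_connected].
rewrite fibers_connected; split.
- exact: walks_split_of_fibers_connected.
- exact: fibers_connected_of_walks_split.
Qed.
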